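(* Let $n,k\ge1$, $\mathbf{k}=(k,k,\dots,k)$ ($n$ entries), and $D\in\mathcal{D}_{\mathbf{k}}$. Then the Walking Algorithm on $(T(D),R(D))$ terminates only after it marks the smallest rank-$1$ box (the box of rank $1$ with the smallest index) and writes down its index; i.e. the last box marked is the smallest rank-$1$ box.
   Context: $N=n+nk$. $\mathcal{D}_{\mathbf{k}}$: sequences $(a_1,\dots,a_N)$ whose positive entries are the $n$ entries $k$, other entries $-1$, all partial sums $a_1+\cdots+a_{i-1}\ge0$. SW-word: $S^{k}$ for an up step, $W$ for $-1$. Filling Algorithm producing $T(D)$: $n$ columns, each with $k+1$ cells; place $1$ at top of column 1; having placed $1,\dots,i-1$, the lowest filled entry of a column is active if not in row $k+1$; if the $i$-th letter is $W$ place $i$ below the smallest active entry, otherwise at the top of the leftmost empty column; continue until $1,\dots,N$ placed. Entries of $T(D)$ are indices. Ranking Algorithm producing $R(D)$: ranks $0,\dots,k$ to column-1 indices top to bottom; for $i=2,\dots,n$, if the top index of column $i$ is $A+1$ and index $A$ has rank $a$, column $i$ gets ranks $a,\dots,a+k$ top to bottom. Among boxes of equal rank, the largest (smallest) is the one with largest (smallest) index. Walking Algorithm: go to the largest rank-$0$ box, mark it, write its index. Repeat: if the current box is in row 1, let $r$ be the rank of the bottom box of its column; otherwise let $r$ be the rank of the box directly above. If an unmarked box of rank $r$ exists, go to the unmarked rank-$r$ box with largest index, mark it and write its index; otherwise stop. *)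

From mathcomp Require Import all_boot all_order all_algebra.
Set Implicit Arguments. Unset Strict Implicit. Unset Printing Implicit Defensive.
Import Order.TTheory GRing.Theory Num.Theory.

(* A sequence D = (a_1,...,a_N) is stored as a seq int with a_i = D`_(i-1).
   Boxes of T(D) are identified with their indices 1..N. *)

Definition Nsize (n k : nat) : nat := n + n * k.

Definition in_Dk (n k : nat) (D : seq int) : Prop :=
  [/\ size D = Nsize n k,
      count (fun x : int => 0 < x)%R D = n,
      all (fun x : int => (0 < x)%R ==> (x == Posz k)) D,
      all (fun x : int => (x <= 0)%R ==> (x == -1)%R) D &
      forall i : nat, (i < size D)%N -> (0 <= \sum_(j < i) D`_j)%R].

(* A filling is a seq of n columns, each column the seq of its entries
   listed top to bottom (row 1 first). *)

Definition active_cols (k : nat) (cols : seq (seq nat)) : seq nat :=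
  [seq c <- iota 0 (size cols) |
    (0 < size (nth [::] cols c)) && (size (nth [::] cols c) <= k)].

Definition low_entry (cols : seq (seq nat)) (c : nat) : nat :=
  last 0 (nth [::] cols c).

Definition smallest_active (k : nat) (cols : seq (seq nat)) : option nat :=
  match active_cols k cols with
  | [::] => None
  | c0 :: cs => Some (foldl (fun b c =>
                  if low_entry cols c < low_entry cols b then c else b) c0 cs)
  end.

Definition fill_step (k : nat) (cols : seq (seq nat)) (i : nat) (up : bool)
  : seq (seq nat) :=
  if up then
    set_nth [::] cols (find (fun col => col == [::]) cols) [:: i]
  else match smallest_active k cols with
       | Some c => set_nth [::] cols c (rcons (nth [::] cols c) i)
       | None => cols
       end.

(* SW-word letter of a_i: S iff a_i is an up step (a_i = k > 0), W iff a_i = -1 *)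
Definition letterS (x : int) : bool := (0 < x)%R.

Definition fillT (n k : nat) (D : seq int) : seq (seq nat) :=
  foldl (fun cols (p : nat * int) => fill_step k cols p.1 (letterS p.2))
        (nseq n [::]) (zip (iota 1 (size D)) D).

(* ranks stored as a seq nat: rank of index x is rk`_x *)
Definition rank_seq (cols : seq (seq nat)) : seq nat :=
  foldl (fun rk (p : nat * seq nat) =>
           let base := if p.1 == 0 then 0 else nth 0 rk (head 0 p.2).-1 in
           foldl (fun rk' (q : nat * nat) => set_nth 0 rk' q.1 (base + q.2))
                 rk (zip p.2 (iota 0 (size p.2))))
        [::] (zip (iota 0 (size cols)) cols).

Definition rankR (n k : nat) (D : seq int) (x : nat) : nat :=
  nth 0 (rank_seq (fillT n k D)) x.

Definition col_of (cols : seq (seq nat)) (x : nat) : seq nat :=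
  nth [::] cols (find (fun col => x \in col) cols).

Definition next_rank (n k : nat) (D : seq int) (x : nat) : nat :=
  let col := col_of (fillT n k D) x in
  if index x col == 0 then rankR n k D (last 0 col)       (* row 1: bottom box *)
  else rankR n k D (nth 0 col (index x col).-1).

Definition boxes (n k : nat) : seq nat := iota 1 (Nsize n k).

(* the walk: [marked] is the list of written indices, in order *)
Fixpoint walk (n k : nat) (D : seq int) (fuel cur : nat) (marked : seq nat)
  : seq nat :=
  match fuel with
  | 0 => marked
  | f.+1 =>
      let r := next_rank n k D cur in
      let cand := [seq x <- boxes n k |
                    (rankR n k D x == r) && (x \notin marked)] in
      if cand is [::] then marked
      else walk n k D f (last 0 cand) (rcons marked (last 0 cand))
  end.

(* The full output of the Walking Algorithm. At most N boxes can ever be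
   marked, so the fuel N never cuts the walk short. *)
Definition walking_output (n k : nat) (D : seq int) : seq nat :=
  let zeros := [seq x <- boxes n k | rankR n k D x == 0] in
  if zeros is [::] then [::]
  else let x0 := last 0 zeros in walk n k D (Nsize n k) x0 [:: x0].

Definition smallest_rank1 (n k : nat) (D : seq int) : nat :=
  head 0 [seq x <- boxes n k | rankR n k D x == 1].

(* In T(D) the Ranking Algorithm gives the k+1 boxes of a column the consecutive
   ranks b, ..., b+k from top to bottom, so the rank that the Walking Algorithm
   reads off a box is the rank of its cyclic predecessor in its column. Rotating
   every column permutes the boxes, so each value occurs as often as a rank as it
   does as a read-off rank. Such a walk
   marks the boxes of each rank in decreasing order. When the walk started at
   the largest rank-0 box gets stuck at z, counting ranks along the walk
   against the balance shows that z reads off 0, so z has rank 1. Suppose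
   some box stays unmarked, and take one of minimal rank v > 0. Climbing its
   column, and from a column top to the preceding index, gives a box of rank
   v that reads off v-1 and is unmarked as well. By the balance there is then
   an unmarked box of rank v-1, a contradiction. So every box is marked, and
   z, the last rank-1 box to be marked, is the smallest one. *)

From mathcomp Require Import all_boot all_order all_algebra.
From mathcomp Require Import zify.
Set Implicit Arguments. Unset Strict Implicit. Unset Printing Implicit Defensive.
Import Order.TTheory.

Lemma sorted_ltn_le_last (s : seq nat) y : sorted ltn s -> y \in s -> y <= last 0 s.
Proof.
elim: s y => //= a [|b s] IH y; first by move=> _; rewrite inE => /eqP->.
move=> /andP[ab bs]; rewrite inE => /orP[/eqP->|ys]; last exact: IH.
exact: leq_trans (ltnW ab) (IH b bs (mem_head _ _)).
Qed.

Lemma sorted_ltn_head_le (s : seq nat) y : sorted ltn s -> y \in s -> head 0 s <= y.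
Proof.
case: s => //= a s a_s; rewrite inE => /orP[/eqP->//|ys].
by apply: ltnW; move/allP: (order_path_min ltn_trans a_s); apply.
Qed.

Lemma count_uniq_sub (P : pred nat) (M s : seq nat) : uniq M -> {subset M <= s} ->
  uniq s -> count P M = count (fun x => P x && (x \in M)) s.
Proof.
move=> uM sMs us; have M_perm : perm_eq M [seq x <- s | x \in M].
  apply: uniq_perm => //; first exact: filter_uniq.
  by move=> x; rewrite mem_filter; case xM: (x \in M); rewrite /= ?sMs.
by rewrite (permP M_perm) count_filter.
Qed.

Lemma path_count_shift (rk nx : nat -> nat) v x p :
  path (fun a b => rk b == nx a) x p ->
  count (fun y => rk y == v) (x :: p) + (nx (last x p) == v)
  = (rk x == v) + count (fun y => nx y == v) (x :: p).
Proof.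
elim: p x => [|y p IH] x /=; first by rewrite !addn0 addnC.
by move=> /andP[/eqP rk_y /IH /=]; rewrite rk_y; lia.
Qed.

Lemma count_andC (T : Type) (a b : pred T) s :
  count (fun x => a x && b x) s + count (fun x => a x && ~~ b x) s = count a s.
Proof. by elim: s => //= x s <-; case: (a x); case: (b x) => /=; lia. Qed.

Section GreedyWalk.

Variables (bs : seq nat) (rk nx : nat -> nat).

Fixpoint greedy_walk (fuel cur : nat) (marked : seq nat) : seq nat :=
  match fuel with
  | 0 => marked
  | f.+1 =>
      let cand := [seq x <- bs | (rk x == nx cur) && (x \notin marked)] in
      if cand is [::] then marked
      else greedy_walk f (last 0 cand) (rcons marked (last 0 cand))
  end.

Definition larger_marked_first (M : seq nat) :=
  forall x y, x \in M -> y \in bs -> rk y = rk x -> x < y ->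
    (y \in M) && (index y M < index x M).

Definition walk_inv (x0 : nat) (t : seq nat) :=
  [/\ uniq (x0 :: t), {subset x0 :: t <= bs},
      path (fun a b => rk b == nx a) x0 t & larger_marked_first (x0 :: t)].

Definition stuck (x0 : nat) (t : seq nat) :=
  forall y, y \in bs -> rk y = nx (last x0 t) -> y \in x0 :: t.

Hypothesis bs_sorted : sorted ltn bs.

Lemma walk_inv_rcons x0 t z : walk_inv x0 t ->
  z \in bs -> rk z = nx (last x0 t) -> z \notin x0 :: t ->
  (forall y, y \in bs -> rk y = nx (last x0 t) -> y \notin x0 :: t -> y <= z) ->
  walk_inv x0 (rcons t z).
Proof.
move=> [uM sMbs walk_path mfirst] zbs rk_z zM z_max; rewrite /walk_inv -rcons_cons; split.
- by rewrite rcons_uniq zM.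
- by move=> y; rewrite mem_rcons inE => /orP[/eqP->|/sMbs].
- by rewrite rcons_path walk_path rk_z eqxx.
move=> x y; rewrite !mem_rcons -!cats1 !index_cat !(in_cons z (x0 :: t)).
case/orP=> [/eqP->|xM] ybs rk_y xy.
  have yM : y \in x0 :: t.
    by apply: contraT => yM; have := z_max y ybs; rewrite rk_y rk_z => /(_ erefl yM); lia.
  have y_idx : index y (x0 :: t) < size (x0 :: t) by rewrite index_mem.
  by rewrite yM orbT (negbTE zM) /= eqxx addn0.
have /andP[yM lt_yx] := mfirst x y xM ybs rk_y xy.
by rewrite yM xM orbT.
Qed.

Lemma greedy_walk_inv x0 f t : walk_inv x0 t -> size bs < (size t).+1 + f ->
  exists t', [/\ greedy_walk f (last x0 t) (x0 :: t) = x0 :: t',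
                 walk_inv x0 t' & stuck x0 t'].
Proof.
elim: f t => [|f IH] t inv_t size_t.
  case: inv_t => uM sMbs _ _; have := uniq_leq_size uM sMbs; rewrite /= addn0 in size_t *; lia.
rewrite /=; set cand := [seq x <- bs | _].
have cand_sorted : sorted ltn cand by apply: sorted_filter => //; exact: ltn_trans.
have candP y : (y \in cand) = [&& rk y == nx (last x0 t), y \notin x0 :: t & y \in bs].
  by rewrite mem_filter andbA.
case Ecand: cand => [|c cs].
  exists t; split=> // y ybs rk_y; apply: contraT => yM.
  by have := candP y; rewrite Ecand ybs rk_y eqxx yM.
have : last 0 cand \in cand by rewrite Ecand; exact: mem_last.
rewrite candP Ecand => /and3P[/eqP rk_z zM zbs].
have := IH (rcons t (last 0 (c :: cs))); rewrite last_rcons; apply; last first.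
  by rewrite size_rcons; lia.
apply: walk_inv_rcons => // y ybs rk_y yM; rewrite -Ecand.
by apply: sorted_ltn_le_last; rewrite // candP rk_y eqxx yM.
Qed.

Hypothesis rank_balance :
  forall v, count (fun x => rk x == v) bs = count (fun x => nx x == v) bs.

Lemma stuck_next_rank0 x0 t : walk_inv x0 t -> stuck x0 t -> rk x0 = 0 ->
  nx (last x0 t) = 0.
Proof.
move=> [uM sMbs walk_path _] stuck_t rk_x0; set w := nx (last x0 t).
have := path_count_shift w walk_path; rewrite -/w eqxx rk_x0.
have us : uniq bs by exact: sorted_uniq ltn_trans ltnn _ bs_sorted.
rewrite !(count_uniq_sub _ uM sMbs us).
have -> : count (fun y => (rk y == w) && (y \in x0 :: t)) bs = count (fun y => rk y == w) bs.
  by apply: eq_in_count => y ybs /=; case: eqP => //= /(stuck_t y ybs) ->.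
have : count (fun y => (nx y == w) && (y \in x0 :: t)) bs <= count (fun y => nx y == w) bs.
  by apply: sub_count => y /andP[].
by rewrite rank_balance; case: w; lia.
Qed.

Lemma stuck_balanced x0 t : walk_inv x0 t -> stuck x0 t -> rk x0 = 0 ->
  forall v, count (fun y => rk y == v) (x0 :: t) = count (fun y => nx y == v) (x0 :: t).
Proof.
move=> inv_t stuck_t rk_x0 v; have [_ _ walk_path _] := inv_t.
have := path_count_shift v walk_path.
by rewrite stuck_next_rank0 // rk_x0; case: v => [|v] /=; lia.
Qed.

Hypothesis rank_descent : forall x, x \in bs -> 0 < rk x ->
  exists y, [/\ y \in bs, y <= x, rk y = rk x & nx y = (rk x).-1].

Lemma stuck_marks_all x0 t : walk_inv x0 t -> stuck x0 t -> rk x0 = 0 ->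
  {subset bs <= x0 :: t}.
Proof.
move=> inv_t stuck_t rk_x0 y ybs; apply: contraT => yM.
have [uM sMbs _ mfirst] := inv_t; set M := x0 :: t in yM uM sMbs mfirst *.
pose unmarked_rank v := has (fun y => (rk y == v) && (y \notin M)) bs.
have [|v] := ex_minnP (ex_intro unmarked_rank (rk y) _).
  by apply/hasP; exists y; rewrite ?eqxx.
move=> /hasP[y1 y1bs /andP[/eqP rk_y1 y1M]] v_min.
have v_gt0 : 0 < v.
  rewrite lt0n; apply: contra y1M => /eqP v0.
  by apply: (stuck_t y1); rewrite // rk_y1 v0 (stuck_next_rank0 inv_t stuck_t rk_x0).
have [y2 [y2bs y2_le rk_y2 nx_y2]] := rank_descent y1bs (ltac:(by rewrite rk_y1)).
have y2M : y2 \notin M.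
  apply: contra y1M => y2M.
  case: (ltnP y2 y1) => [lt_y21|le_y12]; last by have <- : y2 = y1 by lia.
  by case/andP: (mfirst y2 y1 y2M y1bs (esym rk_y2) lt_y21).
have us : uniq bs by exact: sorted_uniq ltn_trans ltnn _ bs_sorted.
have unmarked_count P : count (fun y => P y && (y \notin M)) bs = count P bs - count P M.
  by rewrite (count_uniq_sub _ uM sMbs us) -(count_andC P (mem M)) addKn.
have : unmarked_rank v.-1.
  rewrite /unmarked_rank has_count unmarked_count rank_balance.
  rewrite (stuck_balanced inv_t stuck_t rk_x0) -unmarked_count -has_count.
  by apply/hasP; exists y2; rewrite // nx_y2 rk_y1 eqxx.
by move/v_min; rewrite leqNgt ltn_predL v_gt0.
Qed.

Hypothesis next_rank0 : forall x, x \in bs -> nx x = 0 -> rk x = 1.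

Theorem greedy_walk_last x0 : x0 \in bs -> rk x0 = 0 ->
  (forall y, y \in bs -> rk y = 0 -> y <= x0) ->
  last 0 (greedy_walk (size bs) x0 [:: x0]) = head 0 [seq x <- bs | rk x == 1].
Proof.
move=> x0bs rk_x0 x0_max.
have inv0 : walk_inv x0 [::].
  split=> //; first by move=> y; rewrite inE => /eqP->.
  move=> x y; rewrite inE => /eqP-> ybs rk_y; rewrite rk_x0 in rk_y.
  by have := x0_max y ybs rk_y; lia.
have [t [-> inv_t stuck_t]] := greedy_walk_inv inv0 (ltnSn (size bs)).
have [uM sMbs _ mfirst] := inv_t.
rewrite /=; set z := last x0 t.
have zM : z \in x0 :: t by exact: mem_last.
have rk_z : rk z = 1 by rewrite next_rank0 ?sMbs ?(stuck_next_rank0 inv_t stuck_t rk_x0).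
have z_rank1 : z \in [seq x <- bs | rk x == 1] by rewrite mem_filter rk_z eqxx sMbs.
set m1 := head 0 _.
have : m1 \in [seq x <- bs | rk x == 1].
  by move: z_rank1; rewrite /m1; case: [seq x <- bs | _] => // a l _; exact: mem_head.
rewrite mem_filter => /andP[/eqP rk_m1 m1bs].
have m1_le : m1 <= z.
  by apply: sorted_ltn_head_le z_rank1; apply: sorted_filter => //; exact: ltn_trans.
case: (ltnP m1 z) => [lt_m1z|]; last by lia.
have m1M := stuck_marks_all inv_t stuck_t rk_x0 m1bs.
have /andP[_] := mfirst m1 z m1M (sMbs z zM) (etrans rk_z (esym rk_m1)) lt_m1z.
rewrite index_last // ltnNge -ltnS.
by rewrite -[(size t).+1]/(size (x0 :: t)) index_mem m1M.
Qed.

End GreedyWalk.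

Lemma perm_flatten_set_nth_rcons (s : seq (seq nat)) c i :
  c < size s -> perm_eq (flatten s) (iota 1 i) ->
  perm_eq (flatten (set_nth [::] s c (rcons (nth [::] s c) i.+1))) (iota 1 i.+1).
Proof.
move=> cs /permP s_perm; apply/permP => P.
have -> : iota 1 i.+1 = iota 1 i ++ [:: i.+1] by rewrite -[i.+1 in LHS]addn1 iotaD.
rewrite count_cat -s_perm.
elim: s c cs {s_perm} => [|col s IH] [|c] //= cs.
  by rewrite -cats1 !count_cat /=; lia.
by rewrite !count_cat IH //=; lia.
Qed.

Lemma size_flatten_ge (s : seq (seq nat)) m b : m <= size s ->
  (forall c, c < m -> b <= size (nth [::] s c)) -> m * b <= size (flatten s).
Proof.
elim: s m => [|col s IH] [|m] //= ms col_ge.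
rewrite size_cat mulSn leq_add ?(col_ge 0) //.
by apply: IH => // c cm; apply: (col_ge c.+1).
Qed.

Lemma size_flatten_le (s : seq (seq nat)) b : (forall c, size (nth [::] s c) <= b) ->
  size (flatten s) <= size s * b.
Proof.
elim: s => [|col s IH] //= col_le; rewrite size_cat mulSn leq_add ?(col_le 0) //.
by apply: IH => c; apply: (col_le c.+1).
Qed.

Lemma size_flatten_full (s : seq (seq nat)) b : (forall c, size (nth [::] s c) <= b) ->
  size (flatten s) = size s * b -> forall c, c < size s -> size (nth [::] s c) = b.
Proof.
elim: s => [|col s IH] //= col_le; rewrite size_cat mulSn.
have := size_flatten_le (fun c => col_le c.+1); have := col_le 0.
move=> /= col_le0 flat_le full [|c] cs /=; first by lia.
by apply: IH => [c'||]; [exact: (col_le c'.+1)|lia|].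
Qed.

Lemma mem_flatten_nth (s : seq (seq nat)) d y : y \in nth [::] s d -> y \in flatten s.
Proof.
move=> y_in; apply/flattenP; exists (nth [::] s d) => //; apply: mem_nth.
by case: (ltnP d (size s)) y_in => // /(nth_default [::]) ->.
Qed.

Lemma flatten_nthP (s : seq (seq nat)) y : y \in flatten s ->
  exists2 d, d < size s & y \in nth [::] s d.
Proof.
move=> /flattenP [col col_in y_in]; exists (index col s); first by rewrite index_mem.
by rewrite nth_index.
Qed.

Lemma nth_flatten_uniq_inj (s : seq (seq nat)) c1 c2 y : uniq (flatten s) ->
  y \in nth [::] s c1 -> y \in nth [::] s c2 -> c1 = c2.
Proof.
elim: s c1 c2 => [|col s IH] [|c1] [|c2] //=; rewrite ?nth_nil // cat_uniq.
- move=> /and3P[_ /hasP disj _] y1 y2; case: disj; exists y => //; exact: mem_flatten_nth y2.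
- move=> /and3P[_ /hasP disj _] y1 y2; case: disj; exists y => //; exact: mem_flatten_nth y1.
- by move=> /and3P[_ _ us] y1 y2; congr S; apply: IH y1 y2.
Qed.

Lemma nth_flatten_uniq (s : seq (seq nat)) c : uniq (flatten s) -> uniq (nth [::] s c).
Proof.
elim: s c => [|col s IH] [|c] //=; rewrite cat_uniq => /and3P[col_uniq _ s_uniq] //.
exact: IH.
Qed.

Lemma nth_rotr1 (s : seq nat) j : j < size s ->
  nth 0 (rotr 1 s) j = if j == 0 then last 0 s else nth 0 s j.-1.
Proof.
case/lastP: s => // s x; rewrite rotr1_rcons size_rcons ltnS last_rcons.
by case: j => [|j] //= js; rewrite nth_rcons js.
Qed.

Lemma foldl_choose_mem (f : nat -> nat -> nat) c0 cs :
  (forall b c, f b c = b \/ f b c = c) -> foldl f c0 cs \in c0 :: cs.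
Proof.
move=> f_choose; elim: cs c0 => [|c cs IH] c0 /=; first exact: mem_head.
have := IH (f c0 c); rewrite !inE => /orP[/eqP->|->]; last by rewrite !orbT.
by case: (f_choose c0 c) => ->; rewrite eqxx ?orbT.
Qed.

Lemma smallest_activeP k cols : active_cols k cols != [::] ->
  exists2 c, smallest_active k cols = Some c & c \in active_cols k cols.
Proof.
rewrite /smallest_active; case: (active_cols k cols) => // c0 cs _.
by eexists; first reflexivity; apply: foldl_choose_mem => b c; case: ifP; auto.
Qed.

Lemma find_first (T : Type) (P : pred T) x0 (s : seq T) m : m < size s ->
  P (nth x0 s m) -> (forall c, c < m -> ~~ P (nth x0 s c)) -> find P s = m.
Proof.
elim: s m => [|x s IH] [|m] //= ms Pm before_m; first by rewrite Pm.
by rewrite (negbTE (before_m 0 erefl)); congr S; apply: IH => // c cm; apply: (before_m c.+1).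
Qed.

Record filling_inv (n k i m : nat) (cols : seq (seq nat)) : Prop := FillingInv {
  fill_m_le : m <= n;
  fill_size : size cols = n;
  fill_nonempty : forall c, c < n -> (nth [::] cols c != [::]) = (c < m);
  fill_perm : perm_eq (flatten cols) (iota 1 i);
  fill_col_le : forall c, size (nth [::] cols c) <= k.+1;
  fill_head0 : 0 < m -> head 0 (nth [::] cols 0) = 1;
  (* the predecessor of a column top is ranked before that column is *)
  fill_head : forall c, 0 < c < m ->
    exists2 d, d < c & (head 0 (nth [::] cols c)).-1 \in nth [::] cols d }.

Lemma active_cols_nil n k i m cols : filling_inv n k i m cols ->
  active_cols k cols = [::] -> m * k.+1 <= i.
Proof.
move=> [m_le sz nonempty perm col_le _ _] no_active.
have full c : c < m -> k.+1 <= size (nth [::] cols c).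
  move=> cm; rewrite ltnNge; apply/negP => ck.
  have : c \in active_cols k cols.
    rewrite mem_filter mem_iota sz (leq_trans cm m_le) ck andbT /= lt0n size_eq0.
    by rewrite nonempty ?cm // (leq_trans cm m_le).
  by rewrite no_active.
by rewrite -(size_iota 1 i) -(perm_size perm) size_flatten_ge ?sz.
Qed.

Lemma fill_step_W_inv n k i m cols : filling_inv n k i m cols -> i < m * k.+1 ->
  filling_inv n k i.+1 m (fill_step k cols i.+1 false).
Proof.
move=> inv i_lt; have [m_le sz nonempty perm col_le head0 head_prev] := inv.
have [c' Ec' c'_active] : exists2 c', smallest_active k cols = Some c'
    & c' \in active_cols k cols.
  apply: smallest_activeP; apply/eqP => no_active.
  by have := active_cols_nil inv no_active; lia.
move: c'_active; rewrite mem_filter mem_iota add0n sz => /andP[/andP[col_gt0 col_le_k] c'n].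
rewrite /fill_step Ec'; set col := nth [::] cols c'.
have col_ne : col != [::] by rewrite -size_eq0 -lt0n.
have c'm : c' < m by rewrite -nonempty.
have head_grow d :
    head 0 (nth [::] (set_nth [::] cols c' (rcons col i.+1)) d) = head 0 (nth [::] cols d).
  by rewrite nth_set_nth /=; case: (d =P c') => // ->; rewrite -/col; case: (col) col_ne.
split=> //.
- by rewrite size_set_nth sz; apply/maxn_idPr.
- move=> c cn; rewrite nth_set_nth /=; case: (c =P c') => [->|_]; last exact: nonempty.
  by rewrite c'm -size_eq0 size_rcons.
- by apply: perm_flatten_set_nth_rcons; rewrite ?sz.
- by move=> c; rewrite nth_set_nth /=; case: (c =P c') => // _; rewrite size_rcons.
- by rewrite head_grow.
move=> c /head_prev [d dc head_in]; exists d; rewrite // head_grow nth_set_nth /=.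
by case: (d =P c') => [E|//]; rewrite mem_rcons inE /col -E head_in orbT.
Qed.

Lemma fill_step_S_inv n k i m cols : filling_inv n k i m cols -> m < n ->
  i <= m * k.+1 -> filling_inv n k i.+1 m.+1 (fill_step k cols i.+1 true).
Proof.
move=> [m_le sz nonempty perm col_le head0 head_prev] mn i_le.
have col_m : nth [::] cols m = [::] by apply/eqP; rewrite -[_ == _]negbK nonempty ?ltnn.
have find_m : find (fun col => col == [::]) cols = m.
  apply: (find_first (x0 := [::])); rewrite ?sz ?col_m //.
  by move=> c cm; rewrite nonempty // (ltn_trans cm mn).
rewrite /fill_step find_m; split=> //.
- by rewrite size_set_nth sz; apply/maxn_idPr.
- move=> c cn; rewrite nth_set_nth /=; case: (c =P m) => [->|/eqP c_ne]; first by rewrite ltnSn.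
  by rewrite nonempty // ltnS [c <= m]leq_eqVlt (negbTE c_ne).
- by have := perm_flatten_set_nth_rcons (ltac:(by rewrite sz) : m < size cols) perm;
    rewrite col_m.
- by move=> c; rewrite nth_set_nth /=; case: (c =P m).
- move=> _; rewrite nth_set_nth /=; case: (0 =P m) => [m0|/eqP m_ne]; last first.
    by apply: head0; rewrite lt0n eq_sym.
  by move: i_le; rewrite -m0 mul0n leqn0 => /eqP->.
move=> c /andP[c_gt0 cm]; rewrite nth_set_nth /=; case: (c =P m) => [c_m|/eqP c_ne]; last first.
  have cm' : c < m by rewrite ltn_neqAle c_ne -ltnS.
  have [d dc head_in] := head_prev c (ltac:(by rewrite c_gt0 cm')).
  by exists d; rewrite // nth_set_nth /= (ltn_eqF (ltn_trans dc cm')).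
have m_gt0 : 0 < m by rewrite -c_m.
have i_gt0 : 0 < i.
  have col0 : nth [::] cols 0 != [::] by rewrite nonempty // (ltn_trans m_gt0 mn).
  have : 1 \in nth [::] cols 0.
    by rewrite -(head0 m_gt0); case: (nth [::] cols 0) col0 => // a l _; exact: mem_head.
  by move/mem_flatten_nth; rewrite (perm_mem perm) mem_iota; lia.
have : i \in flatten cols by rewrite (perm_mem perm) mem_iota; lia.
move=> /flatten_nthP [d dsz i_in]; rewrite sz in dsz.
have dm : d < m by rewrite -nonempty //; apply: contraTneq i_in => ->.
by exists d; rewrite ?c_m // nth_set_nth /= (ltn_eqF dm).
Qed.

Definition ups (p : seq int) : nat := count letterS p.

Lemma in_Dk_entries n k D : in_Dk n k D ->
  {in D, forall x, x = if letterS x then Posz k else (-1)%R}.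
Proof.
case=> _ _ /allP up_k /allP down_1 _ x xD; rewrite /letterS.
case: ifP => [x_gt0|]; first by have := up_k x xD; rewrite x_gt0 => /eqP.
by move/negbT; rewrite -leNgt => x_le0; have := down_1 x xD; rewrite x_le0 => /eqP.
Qed.

Lemma prefix_sum_ups (k : nat) (D : seq int) i :
  {in D, forall x, x = if letterS x then Posz k else (-1)%R} -> i <= size D ->
  (\sum_(j < i) D`_j + Posz (i - ups (take i D)) = Posz (ups (take i D) * k))%R.
Proof.
move=> entries; elim: i => [|i IH] i_lt; first by rewrite big_ord0 take0.
have u_le : ups (take i D) <= i by rewrite -{2}(size_takel (ltnW i_lt)) count_size.
have -> : (\sum_(j < i.+1) D`_j = \sum_(j < i) D`_j + D`_i)%R by rewrite big_ord_recr.
rewrite (take_nth 0%R i_lt) /ups -cats1 count_cat /= addn0 -/(ups _).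
move: (entries _ (mem_nth 0%R i_lt)) (IH (ltnW i_lt)).
case: (letterS D`_i) => -> sum_i /=; rewrite ?addn1 ?addn0 ?subSS ?subSn //.
(* [lia] only treats the sum as an atom once it is abstracted. *)
all: set s := (\sum_(_ < i) _)%R in sum_i *; lia.
Qed.

Lemma in_Dk_prefix_bound n k D i : in_Dk n k D -> i <= size D ->
  i <= ups (take i D) * k.+1.
Proof.
move=> D_in i_le; have [size_D ups_D _ _ prefix_ge0] := D_in.
have sum_i := prefix_sum_ups (in_Dk_entries D_in).
(* [in_Dk] bounds only proper prefix sums; the full sum is 0 by counting steps. *)
have sum_ge0 : (0 <= \sum_(j < i) D`_j)%R.
  case: (ltngtP i (size D)) i_le => [i_lt _|//|i_eq _]; first exact: prefix_ge0.
  rewrite i_eq; have := sum_i _ (leqnn _); rewrite take_size [ups D]ups_D size_D /Nsize.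
  by set s := (\sum_(_ < _) _)%R; lia.
have := sum_i _ i_le; set s := (\sum_(_ < i) _)%R in sum_ge0 *.
have : ups (take i D) <= i by rewrite -{2}(size_takel i_le) count_size.
by rewrite mulnS; lia.
Qed.

Lemma fillT_rcons n k p a :
  fillT n k (rcons p a) = fill_step k (fillT n k p) (size p).+1 (letterS a).
Proof.
have iota_rcons : iota 1 (size p).+1 = rcons (iota 1 (size p)) (size p).+1.
  by rewrite -cats1 -[(size p).+1 in LHS]addn1 iotaD.
by rewrite /fillT size_rcons iota_rcons zip_rcons ?size_iota // foldl_rcons.
Qed.

Lemma fillT_prefix_inv n k D i : in_Dk n k D -> i <= size D ->
  filling_inv n k i (ups (take i D)) (fillT n k (take i D)).
Proof.
move=> D_in; have [_ ups_D _ _ _] := D_in; elim: i => [|i IH] i_lt.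
  rewrite take0; split=> //; rewrite ?size_nseq //.
  - by move=> c cn; rewrite nth_nseq cn.
  - by elim: (n).
  - by move=> c; rewrite nth_nseq; case: ifP.
  - by move=> c /andP[].
have take_i : take i.+1 D = rcons (take i D) (D`_i)%R by rewrite (take_nth 0%R i_lt).
have size_take_i : size (take i D) = i by rewrite size_takel // ltnW.
have ups_i : ups (take i.+1 D) = ups (take i D) + letterS (D`_i)%R.
  by rewrite take_i /ups -cats1 count_cat /= addn0.
rewrite take_i fillT_rcons size_take_i -take_i ups_i.
case: (boolP (letterS (D`_i)%R)) => up /=.
- rewrite addn1; apply: fill_step_S_inv; first exact: IH (ltnW i_lt).
  + have : ups (take i.+1 D) <= ups D.
      by rewrite /ups -[X in _ <= count _ X](cat_take_drop i.+1 D) count_cat leq_addr.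
    by rewrite ups_i up [ups D]ups_D addn1.
  + exact: in_Dk_prefix_bound D_in (ltnW i_lt).
- rewrite addn0; apply: fill_step_W_inv; first exact: IH (ltnW i_lt).
  by have := in_Dk_prefix_bound D_in i_lt; rewrite ups_i (negbTE up) addn0.
Qed.

Lemma fillT_inv n k D : in_Dk n k D -> filling_inv n k (Nsize n k) n (fillT n k D).
Proof.
move=> D_in; have [size_D ups_D _ _ _] := D_in.
by have := fillT_prefix_inv D_in (leqnn _); rewrite take_size [ups D]ups_D size_D.
Qed.

Lemma fillT_col_size n k D c : in_Dk n k D -> c < n ->
  size (nth [::] (fillT n k D) c) = k.+1.
Proof.
move=> D_in cn; have [_ sz _ perm col_le _ _] := fillT_inv D_in.
apply: (size_flatten_full col_le); rewrite ?sz //.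
by rewrite (perm_size perm) size_iota /Nsize mulnS.
Qed.

Lemma nth_fold_rank_col (rk col : seq nat) b s y : uniq col ->
  nth 0 (foldl (fun rk' (q : nat * nat) => set_nth 0 rk' q.1 (b + q.2)) rk
           (zip col (iota s (size col)))) y
  = if y \in col then b + s + index y col else nth 0 rk y.
Proof.
elim: col rk s => [|a col IH] rk s //= /andP[a_col col_uniq].
rewrite IH // nth_set_nth /= inE; case: (eqVneq y a) => [->|y_a] /=.
  by rewrite (negbTE a_col) addn0.
by case: ifP => // _; lia.
Qed.

Lemma rank_seq_rcons s col : nth 0 (rank_seq (rcons s col)) =1
  nth 0 (foldl (fun rk' (q : nat * nat) =>
          set_nth 0 rk' q.1 ((if size s == 0 then 0
                              else nth 0 (rank_seq s) (head 0 col).-1) + q.2))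
        (rank_seq s) (zip col (iota 0 (size col)))).
Proof.
have iota_rcons : iota 0 (size (rcons s col)) = rcons (iota 0 (size s)) (size s).
  by rewrite size_rcons -cats1 -addn1 iotaD.
by move=> y; rewrite /rank_seq iota_rcons zip_rcons ?size_iota // foldl_rcons.
Qed.

Lemma nth_rank_seq (s : seq (seq nat)) : uniq (flatten s) ->
  (forall c, 0 < c < size s ->
     exists2 d, d < c & (head 0 (nth [::] s c)).-1 \in nth [::] s d) ->
  forall c j, c < size s -> j < size (nth [::] s c) ->
  nth 0 (rank_seq s) (nth 0 (nth [::] s c) j)
  = (if c == 0 then 0 else nth 0 (rank_seq s) (head 0 (nth [::] s c)).-1) + j.
Proof.
elim/last_ind: s => [|s col IH] //.
rewrite flatten_rcons cat_uniq => /and3P[s_uniq disj col_uniq] head_prev.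
have rank_rcons y : nth 0 (rank_seq (rcons s col)) y =
    if y \in col then (if size s == 0 then 0 else nth 0 (rank_seq s) (head 0 col).-1)
                      + index y col
    else nth 0 (rank_seq s) y.
  by rewrite rank_seq_rcons nth_fold_rank_col // addn0.
have rank_old y : y \in flatten s -> nth 0 (rank_seq (rcons s col)) y = nth 0 (rank_seq s) y.
  by move=> ys; rewrite rank_rcons; case: ifP => // y_col; case/hasP: disj; exists y.
have head_prev_old c : 0 < c < size s ->
    exists2 d, d < c & (head 0 (nth [::] s c)).-1 \in nth [::] s d.
  move=> /andP[c_gt0 cs]; have := head_prev c.
  rewrite size_rcons (ltn_trans cs (ltnSn _)) c_gt0 nth_rcons cs => /(_ erefl) [d dc d_in].
  by exists d => //; move: d_in; rewrite nth_rcons (ltn_trans dc cs).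
move=> c j; rewrite size_rcons ltnS leq_eqVlt => /orP[/eqP->|cs].
  rewrite nth_rcons ltnn eqxx => j_lt.
  rewrite rank_rcons mem_nth // index_uniq //; case: (eqVneq (size s) 0) => // s_ne.
  have := head_prev (size s); rewrite nth_rcons ltnn eqxx size_rcons ltnSn andbT lt0n.
  move=> /(_ s_ne) [d ds]; rewrite nth_rcons ds => /mem_flatten_nth d_in.
  by rewrite rank_old.
rewrite nth_rcons cs => j_lt.
rewrite rank_old ?IH //; last exact/mem_flatten_nth/mem_nth.
case: (eqVneq c 0) => // c_ne.
have [d dc /mem_flatten_nth d_in] := head_prev_old c (ltac:(by rewrite lt0n c_ne)).
by rewrite rank_old.
Qed.

Section Tableau.

Variables (n k : nat) (D : seq int).
Hypothesis D_in : in_Dk n k D.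

Local Notation T := (fillT n k D).
Local Notation R := (rankR n k D).
Local Notation col c := (nth [::] T c).
Local Notation cell c j := (nth 0 (col c) j).
Local Notation base c := (if c == 0 then 0 else R (head 0 (col c)).-1).

Lemma fillT_uniq : uniq (flatten T).
Proof. by rewrite (perm_uniq (fill_perm (fillT_inv D_in))) iota_uniq. Qed.

Lemma mem_boxes x : (x \in boxes n k) = (x \in flatten T).
Proof. by rewrite (perm_mem (fill_perm (fillT_inv D_in))). Qed.

Lemma rankR_cell c j : c < n -> j < k.+1 -> R (cell c j) = base c + j.
Proof.
have [_ sz _ _ _ _ head_prev] := fillT_inv D_in.
move=> cn jk; apply: nth_rank_seq; rewrite ?sz ?fillT_col_size //.
exact: fillT_uniq.
Qed.

Lemma col_ofE x c : c < n -> x \in col c -> col_of T x = col c.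
Proof.
have [_ sz _ _ _ _ _] := fillT_inv D_in.
move=> cn x_in; have has_x : has (fun col => x \in col) T.
  by apply/hasP; exists (col c); rewrite ?mem_nth ?sz.
by congr nth; apply: (nth_flatten_uniq_inj fillT_uniq (nth_find [::] has_x)).
Qed.

Lemma boxes_cell x : x \in boxes n k -> exists2 c, c < n & x \in col c.
Proof.
have [_ sz _ _ _ _ _] := fillT_inv D_in.
by rewrite mem_boxes => /flatten_nthP [c]; rewrite sz; exists c.
Qed.

Lemma next_rank_cell c j : c < n -> j < k.+1 ->
  next_rank n k D (cell c j) = R (nth 0 (rotr 1 (col c)) j).
Proof.
move=> cn jk; have col_size := fillT_col_size D_in cn.
have cell_in : cell c j \in col c by rewrite mem_nth ?col_size.
rewrite /next_rank (col_ofE cn cell_in) index_uniq ?col_size ?nth_rotr1 ?col_size //.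
  by case: (j == 0).
exact: nth_flatten_uniq fillT_uniq.
Qed.

Lemma next_rank_cell_base c j : c < n -> j < k.+1 ->
  next_rank n k D (cell c j) = base c + (if j == 0 then k else j.-1).
Proof.
move=> cn jk; have col_size := fillT_col_size D_in cn.
rewrite next_rank_cell // nth_rotr1 ?col_size // -nth_last col_size.
by case: j jk => [|j] jk; rewrite rankR_cell // ltnW.
Qed.

Lemma count_next_rank v : count (fun x => R x == v) (boxes n k)
  = count (fun x => next_rank n k D x == v) (boxes n k).
Proof.
have [_ sz _ perm _ _ _] := fillT_inv D_in.
rewrite /boxes -!(permP perm) !count_flatten; congr sumn.
apply/eq_in_map => s /(nthP [::]) [c cs <-]; rewrite sz in cs.
have map_next : map (next_rank n k D) (col c) = map R (rotr 1 (col c)).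
  apply: (eq_from_nth (x0 := 0)) => [|j]; rewrite !size_map ?size_rotr // => jk.
  by rewrite !(nth_map 0) ?size_rotr // next_rank_cell // -(fillT_col_size D_in cs).
rewrite -[RHS](count_map _ (pred1 v)) map_next count_map.
by apply/permP; rewrite perm_sym perm_rotr.
Qed.

Lemma boxes_cellP x : x \in boxes n k ->
  exists c j, [/\ c < n, j < k.+1 & x = cell c j].
Proof.
move=> /boxes_cell [c cn x_col]; exists c, (index x (col c)); split=> //.
  by rewrite -(fillT_col_size D_in cn) index_mem.
by rewrite nth_index.
Qed.

Lemma rankR_descent x : x \in boxes n k -> 0 < R x ->
  exists y, [/\ y \in boxes n k, y <= x, R y = R x & next_rank n k D y = (R x).-1].
Proof.
elim/ltn_ind: x => x IH x_in; have [c [j [cn jk x_cell]]] := boxes_cellP x_in.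
rewrite x_cell rankR_cell //; case: j jk x_cell => [|j] jk x_cell R_gt0; last first.
  by exists x; split=> //; rewrite x_cell ?next_rank_cell_base ?rankR_cell // addnS.
have [c0|c_ne] := eqVneq c 0; first by rewrite c0 in R_gt0.
rewrite (negbTE c_ne) addn0 -nth0 -x_cell in R_gt0 *.
have [_ _ _ _ _ _ head_prev] := fillT_inv D_in.
have [d _] := head_prev c (ltac:(by rewrite lt0n c_ne cn)).
rewrite -nth0 -x_cell => /mem_flatten_nth; rewrite -mem_boxes => x'_in.
have x'_lt : x.-1 < x by rewrite ltn_predL; move: x_in; rewrite mem_iota => /andP[].
have [y [y_in y_le R_y next_y]] := IH x.-1 x'_lt x'_in R_gt0.
by exists y; rewrite R_y next_y (leq_trans y_le (leq_pred x)).
Qed.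

Lemma next_rank_eq0 x : 0 < k -> x \in boxes n k -> next_rank n k D x = 0 -> R x = 1.
Proof.
move=> k_gt0 /boxes_cellP [c [j [cn jk ->]]].
by rewrite next_rank_cell_base // rankR_cell //; case: j {jk} => [|[|j]] /=; lia.
Qed.

Lemma rankR_box1 : 0 < n -> 1 \in boxes n k /\ R 1 = 0.
Proof.
have [_ _ _ _ _ head0 _] := fillT_inv D_in.
move=> n_gt0; split; first by rewrite mem_iota /Nsize; lia.
by rewrite -(head0 n_gt0) -nth0 rankR_cell.
Qed.

End Tableau.

Lemma walk_greedy_walk n k D fuel cur marked :
  walk n k D fuel cur marked
  = greedy_walk (boxes n k) (rankR n k D) (next_rank n k D) fuel cur marked.
Proof.
elim: fuel cur marked => [//|fuel IH] cur marked /=.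
by case: [seq x <- _ | _] => // x s; apply: IH.
Qed.

Theorem mainTheorem8 (n k : nat) (D : seq int) :
  (1 <= n)%N -> (1 <= k)%N -> in_Dk n k D ->
  last 0 (walking_output n k D) = smallest_rank1 n k D.
Proof.
move=> n_gt0 k_gt0 D_in.
have boxes_sorted : sorted ltn (boxes n k) by exact: iota_ltn_sorted.
have [box1 rank_box1] := rankR_box1 D_in n_gt0.
set zeros := [seq x <- boxes n k | rankR n k D x == 0].
have x0_zero : last 0 zeros \in zeros.
  have : 1 \in zeros by rewrite mem_filter rank_box1 eqxx.
  by case: zeros => // x s _; exact: mem_last.
move: (x0_zero); rewrite mem_filter => /andP[/eqP rank_x0 x0_in].
rewrite /walking_output /smallest_rank1 -/zeros.
case E: zeros x0_zero => [//|? ?] _; rewrite -E walk_greedy_walk.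
rewrite -[Nsize n k](size_iota 1) greedy_walk_last //.
- exact: count_next_rank.
- exact: rankR_descent.
- by move=> x; apply: next_rank_eq0.
- move=> y y_in rank_y; apply: sorted_ltn_le_last.
    by apply: sorted_filter => //; exact: ltn_trans.
  by rewrite mem_filter rank_y eqxx.
Qed.
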